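(* Let $T:\mathcal{H}\to Y$ be a linear operator from a (real or complex) Hilbert space $\mathcal{H}$ to a Banach space $Y$. If $T$ maps every orthonormal sequence of $\mathcal{H}$ onto a limited subset of $Y$, then $T$ is bounded.
   Context: A subset $A$ of a normed space $Y$ is called limited if every weak$^*$-null sequence $(f_n)$ in the dual $Y'$ converges to zero uniformly on $A$, i.e. $\sup_{a\in A}|f_n(a)|\to 0$. *)

From HB Require Import structures.
From mathcomp Require Import all_boot all_order all_algebra.
From mathcomp Require Import all_classical all_reals all_analysis.
From mathcomp Require Import complex.
Set Implicit Arguments. Unset Strict Implicit. Unset Printing Implicit Defensive.
Import Order.TTheory GRing.Theory Num.Theory.
Import numFieldNormedType.Exports.
Local Open Scope classical_set_scope.
Local Open Scope ring_scope.

Definition Cx (R : realType) : numClosedFieldType := (R[i])%C.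

Section Defs.
Variables (K : numFieldType) (conj : K -> K).

Definition is_inner_product (H : normedModType K) (ip : H -> H -> K) : Prop :=
  [/\ forall (a : K) (x y z : H), ip (a *: x + y) z = a * ip x z + ip y z,
      forall x y : H, ip y x = conj (ip x y)
    & forall x : H, ip x x = `|x| ^+ 2].

(* A Hilbert space is a complete normed space (H : completeNormedModType K)
   whose norm is induced by an inner product. *)

Definition orthonormal_seq (H : normedModType K) (ip : H -> H -> K)
    (e : nat -> H) : Prop :=
  forall i j : nat, ip (e i) (e j) = (i == j)%:R.

Definition dual_elem (Y : normedModType K) (f : Y -> K) : Prop :=
  (forall (a : K) (x y : Y), f (a *: x + y) = a * f x + f y) /\ continuous f.

Definition weak_star_null (Y : normedModType K) (f : nat -> Y -> K) : Prop :=
  (forall n, dual_elem (f n)) /\ (forall y : Y, (fun n => f n y) @ \oo --> 0).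

Definition limited (Y : normedModType K) (A : set Y) : Prop :=
  forall f : nat -> Y -> K, weak_star_null f ->
    forall eps : K, 0 < eps ->
      \forall n \near \oo, forall a, A a -> `|f n a| <= eps.

Definition bounded_op (H Y : normedModType K) (T : H -> Y) : Prop :=
  exists M : K, forall x : H, `|T x| <= M * `|x|.

End Defs.

(* If T is unbounded, so is its restriction to the orthogonal complement of any
   finite orthonormal family, since the finite-rank part x |-> sum <x, e_i> T e_i
   is bounded.  Hence one can choose inductively an orthonormal sequence (e_n)
   with ||T e_n|| > n + 1.  Its image is not limited: if g_n is a norming
   functional for T e_n (Hahn-Banach; in the complex case applied to the
   realification of Y and then complexified), then f_n := g_n / (n + 1) is
   weak*-null while |f_n (T e_n)| > 1. *)

From HB Require Import structures.
From mathcomp Require Import all_boot all_order all_algebra.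
From mathcomp Require Import all_classical all_reals all_analysis.
From mathcomp Require Import complex ring lra.
Set Implicit Arguments. Unset Strict Implicit. Unset Printing Implicit Defensive.
Import Order.TTheory GRing.Theory Num.Theory.
Import numFieldNormedType.Exports.
Local Open Scope classical_set_scope.
Local Open Scope ring_scope.

Section HahnBanach.
Variables (R : realType) (V : lmodType R) (p : V -> R).
Hypotheses (pD : forall x y, p (x + y) <= p x + p y)
  (pZ : forall a x, p (a *: x) = `|a| * p x).

Lemma seminorm0 : p 0 = 0.
Proof. by rewrite -(scale0r 0) pZ normr0 mul0r. Qed.

Lemma seminormN x : p (- x) = p x.
Proof. by rewrite -scaleN1r pZ normrN1 mul1r. Qed.

Lemma seminorm_ge0 x : 0 <= p x.
Proof.
have := pD x (- x); rewrite subrr seminorm0 seminormN -mulr2n.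
by rewrite pmulrn_lge0.
Qed.

Definition dominated_linear_graph (G : set (V * R)) :=
  [/\ forall x r r', G (x, r) -> G (x, r') -> r = r',
      forall a x r x' r', G (x, r) -> G (x', r') -> G (a *: x + x', a * r + r')
    & forall x r, G (x, r) -> r <= p x].

Lemma graph0 G x r : dominated_linear_graph G -> G (x, r) -> G (0, 0).
Proof.
by case=> _ Gl _ Gxr; have := Gl (-1) _ _ _ _ Gxr Gxr; rewrite scaleN1r mulN1r !addNr.
Qed.

Lemma graphZ G a x r : dominated_linear_graph G -> G (x, r) -> G (a *: x, a * r).
Proof.
move=> DG Gxr; rewrite -[a *: x]addr0 -[a * r]addr0.
by have [_ Gl _] := DG; apply: Gl Gxr (graph0 DG Gxr).
Qed.

Variable y0 : V.

(* Requiring (y0, p y0) only of nonempty graphs keeps set0, the union of the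
   empty chain, admissible. *)
Definition admissible G := dominated_linear_graph G /\ (G !=set0 -> G (y0, p y0)).

Lemma exists_maximal_admissible :
  exists A, admissible A /\ forall B, A `<` B -> ~ admissible B.
Proof.
apply: Zorn_bigcup => F FA Ftot.
have upper X Y : F X -> F Y -> exists2 Z, F Z & X `<=` Z /\ Y `<=` Z.
  move=> FX FY; have [XY|YX] := Ftot _ _ FX FY.
  - by exists Y => //; split=> // ? ?.
  - by exists X => //; split=> // ? ?.
split; first split.
- move=> x r r' [X FX Xr] [Y FY Yr']; have [Z FZ [XZ YZ]] := upper _ _ FX FY.
  by have [[Zf _ _] _] := FA _ FZ; apply: Zf (XZ _ Xr) (YZ _ Yr').
- move=> a x r x' r' [X FX Xr] [Y FY Yr']; have [Z FZ [XZ YZ]] := upper _ _ FX FY.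
  by exists Z => //; have [[_ Zl _] _] := FA _ FZ; apply: Zl (XZ _ Xr) (YZ _ Yr').
- by move=> x r [X FX Xr]; have [[_ _ Xp] _] := FA _ FX; apply: Xp.
- move=> [z [X FX Xz]]; exists X => //.
  by have [_ Xy0] := FA _ FX; apply: Xy0; exists z.
Qed.

Definition line_graph := [set (t *: y0, t * p y0) | t in [set: R]].

Lemma admissible_line_graph : admissible line_graph.
Proof.
split; last by move=> _; exists 1; rewrite ?scale1r ?mul1r.
split.
- move=> x r r' [t _ [<- <-]] [t' _ [/eqP + <-]].
  rewrite -subr_eq0 -scalerBl scaler_eq0 subr_eq0 => /orP[/eqP -> //|/eqP ->].
  by rewrite seminorm0 !mulr0.
- move=> a x r x' r' [t _ [<- <-]] [t' _ [<- <-]]; exists (a * t + t') => //.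
  by rewrite scalerDl scalerA mulrDl mulrA.
- move=> x r [t _ [<- <-]]; rewrite pZ ler_wpM2r ?seminorm_ge0 ?real_ler_norm //.
  exact: num_real.
Qed.

Lemma extension_constant G v : dominated_linear_graph G -> G !=set0 ->
  exists c, forall x s, G (x, s) -> s + c <= p (x + v) /\ s - c <= p (x - v).
Proof.
move=> DG [[x0 s0] G0]; have [_ Gl Gp] := DG.
have gap x s x' s' : G (x, s) -> G (x', s') -> s' - p (x' - v) <= p (x + v) - s.
  move=> Gxs Gxs'; have := Gp _ _ (Gl 1 _ _ _ _ Gxs Gxs').
  have := pD (x + v) (x' - v); rewrite addrACA subrr addr0 scale1r mul1r.
  lra.
pose S := [set z.2 - p (z.1 - v) | z in G].
exists (sup S) => x s Gxs; split.
- rewrite -lerBrDl; apply: ge_sup; first by exists (s0 - p (x0 - v)), (x0, s0).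
  by move=> _ [[x' s'] Gxs' <-]; apply: gap Gxs Gxs'.
- rewrite lerBlDr -lerBlDl; apply: ub_le_sup; last by exists (x, s).
  by exists (p (x0 + v) - s0) => _ [[x' s'] Gxs' <-]; apply: gap G0 Gxs'.
Qed.

Definition graph_ext (G : set (V * R)) (v : V) (c : R) :=
  [set w | exists x s t, G (x, s) /\ w = (x + t *: v, s + t * c)].

Lemma graph_ext_dominated G v c : dominated_linear_graph G ->
  (forall x s, G (x, s) -> s + c <= p (x + v) /\ s - c <= p (x - v)) ->
  forall x r, graph_ext G v c (x, r) -> r <= p x.
Proof.
move=> DG Gc _ _ [x [s [t [Gxs [-> ->]]]]].
have scaled u w d : 0 < u -> u^-1 * s + d <= p (u^-1 *: x + w) ->
    s + u * d <= p (x + u *: w).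
  move=> u0; have u0' : u != 0 by rewrite gt_eqF.
  have -> : x + u *: w = u *: (u^-1 *: x + w).
    by rewrite scalerDr scalerA mulfV // scale1r.
  have -> : s + u * d = u * (u^-1 * s + d) by rewrite mulrDr mulrA mulfV // mul1r.
  by rewrite pZ gtr0_norm // ler_pM2l.
have [t_lt0|t_gt0|->] := ltgtP t 0.
- have := scaled (- t) (- v) (- c); rewrite oppr_gt0 mulrNN scalerN scaleNr opprK.
  by apply=> //; exact: (Gc _ _ (graphZ _ DG Gxs)).2.
- by apply: scaled => //; exact: (Gc _ _ (graphZ _ DG Gxs)).1.
- by rewrite scale0r mul0r !addr0; have [_ _ Gp] := DG; apply: Gp.
Qed.

Lemma graph_ext_dominated_linear G v c :
  dominated_linear_graph G -> ~ (exists r, G (v, r)) ->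
  (forall x s, G (x, s) -> s + c <= p (x + v) /\ s - c <= p (x - v)) ->
  dominated_linear_graph (graph_ext G v c).
Proof.
move=> DG Gv Gc; have [Gf Gl _] := DG; split; last exact: graph_ext_dominated.
- move=> _ r r' [x [s [t [Gxs [-> ->]]]]] [x' [s' [t' [Gxs' [ext ->]]]]].
  have [tt'|tt'] := eqVneq t t'.
    move: ext; rewrite tt' => /addIr exx'.
    by rewrite exx' in Gxs; rewrite (Gf _ _ _ Gxs Gxs').
  have d0 : t - t' != 0 by rewrite subr_eq0.
  have dv : (t - t') *: v = x' - x.
    by rewrite scalerBl (canRL (addrK _) (esym ext)) addrAC [x + _]addrC addrK.
  case: Gv; exists ((t - t')^-1 * s' + (- (t - t')^-1) * s).
  have -> : v = (t - t')^-1 *: x' + (- (t - t')^-1) *: x.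
    by rewrite scaleNr -scalerBr -dv scalerA mulVf // scale1r.
  by apply: Gl Gxs' _; apply: graphZ DG Gxs.
- move=> a _ _ _ _ [x [s [t [Gxs [-> ->]]]]] [x' [s' [t' [Gxs' [-> ->]]]]].
  exists (a *: x + x'), (a * s + s'), (a * t + t'); split; first exact: Gl.
  congr (_, _); first by rewrite scalerDr scalerA scalerDl addrACA.
  by rewrite mulrDr mulrDl mulrA addrACA.
Qed.

Lemma maximal_admissible_total A :
  admissible A -> (forall B, A `<` B -> ~ admissible B) -> forall v, exists r, A (v, r).
Proof.
move=> [DA Ay0] Amax v; apply: contrapT => Av.
have A0 : A !=set0.
  apply/set0P/eqP => A0; apply: (Amax _ _ admissible_line_graph).
  by rewrite A0; split=> // /(_ (y0, p y0)) []; exists 1; rewrite ?scale1r ?mul1r.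
have [c Ac] := extension_constant v DA A0.
have AB : A `<=` graph_ext A v c.
  by move=> [x s] Axs; exists x, s, 0; rewrite scale0r mul0r !addr0.
apply: (Amax (graph_ext A v c)); split => //.
- move=> /(_ (v, c)) Bv; apply: Av; exists c; apply: Bv.
  have [[x s] Axs] := A0; exists 0, 0, 1.
  by rewrite scale1r mul1r !add0r; split=> //; apply: graph0 DA Axs.
- exact: graph_ext_dominated_linear.
- by move=> _; apply/AB/Ay0.
Qed.

Theorem hahn_banach : exists f : V -> R, [/\ scalar f, forall x, f x <= p x & f y0 = p y0].
Proof.
have [A [[DA Ay0] Amax]] := exists_maximal_admissible.
have [f Af] := choice (maximal_admissible_total (conj DA Ay0) Amax).
have [Af1 Al Ap] := DA.
exists f; split=> [a x y|x|].
- by apply: (Af1 (a *: x + y)) => //; apply: Al.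
- exact: Ap.
- by apply: (Af1 y0) => //; apply: Ay0; exists (y0, f y0).
Qed.
End HahnBanach.

Definition norming_functional (K : numFieldType) (Y : normedModType K) (y : Y)
    (g : Y -> K) :=
  [/\ scalar g, forall z, `|g z| <= `|z| & `|y| <= `|g y|].

Lemma real_norming_functional (R : realType) (Y : normedModType R) (y : Y) :
  exists g, norming_functional y g.
Proof.
have [g [gl gp gy]] := hahn_banach (@ler_normD _ Y) (@normrZ _ Y) y.
have gB := zmod_morphism_linear gl.
have gN z : g (- z) = - g z by rewrite -sub0r gB -(subrr 0) gB !subrr sub0r.
exists g; split=> // [z|]; last by rewrite gy normr_id.
by rewrite ler_norml gp andbT lerNl -gN (le_trans (gp _)) ?normrN.
Qed.

Section ComplexNorming.
Local Open Scope complex_scope.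
Variable R : realType.
Local Notation Re := (@complex.Re R).

Section Realification.
Variable Y : lmodType (Cx R).

Definition realified : Type := Y.
HB.instance Definition _ := GRing.Zmodule.on realified.

Definition realified_scale (r : R) (v : realified) : realified := r%:C *: (v : Y).

Fact realified_scaleA a b v :
  realified_scale a (realified_scale b v) = realified_scale (a * b) v.
Proof. by rewrite /realified_scale scalerA rmorphM. Qed.

Fact realified_scale1 : left_id 1 realified_scale.
Proof. by move=> v; rewrite /realified_scale rmorph1 scale1r. Qed.

Fact realified_scaleDr : right_distributive realified_scale +%R.
Proof. by move=> a u v; rewrite /realified_scale scalerDr. Qed.

Fact realified_scaleDl v : {morph realified_scale^~ v : a b / a + b}.
Proof. by move=> a b; rewrite /realified_scale rmorphD scalerDl. Qed.

HB.instance Definition _ := GRing.Zmodule_isLmodule.Build R realified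
  realified_scaleA realified_scale1 realified_scaleDr realified_scaleDl.

Variable g : realified -> R.
Hypothesis g_scalar : scalar g.

Definition complexify (v : Y) : Cx R := g v +i* (- g ('i *: v)).

Lemma complexify_scalar : scalar complexify.
Proof.
have gD (u v : Y) : g (u + v) = g u + g v.
  by have := g_scalar 1 u v; rewrite scale1r mul1r; apply.
have gZ r (v : Y) : g (r%:C *: v) = r * g v := scalable_linear g_scalar r v.
move=> [a1 a2] x z; rewrite /complexify.
have ax : (a1 +i* a2) *: x = a1%:C *: x + a2%:C *: ('i *: x).
  rewrite scalerA -scalerDl; congr (_ *: _).
  by apply/eqP; rewrite eq_complex /=; apply/andP; split; apply/eqP; ring.
have iax : 'i *: ((a1 +i* a2) *: x) = (- a2)%:C *: x + a1%:C *: ('i *: x).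
  rewrite scalerA [in RHS]scalerA -scalerDl; congr (_ *: _).
  by apply/eqP; rewrite eq_complex /=; apply/andP; split; apply/eqP; ring.
rewrite scalerDr iax ax !gD !gZ; apply/eqP; rewrite eq_complex /=.
by apply/andP; split; apply/eqP; ring.
Qed.
End Realification.

Lemma complex_norming_functional (Y : normedModType (Cx R)) (y : Y) :
  exists g, norming_functional y g.
Proof.
pose p (v : realified Y) := Re `|v : Y|.
have normE (v : Y) : `|v| = (p v)%:C by rewrite RRe_real ?normr_real.
have pD u v : p (u + v) <= p u + p v.
  by have := ler_normD (u : Y) v; rewrite !normE -rmorphD lecR; apply.
have pZ a v : p (a *: v) = `|a| * p v.
  have normCr : `|a%:C| = `|a|%:C by rewrite normc_def /= expr0n addr0 sqrtr_sqr.
  by have := normrZ a%:C (v : Y); rewrite !normE normCr -rmorphM => /complexI.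
have [g [g_scalar gp gy]] := hahn_banach pD pZ y.
have fZ a v : complexify g (a *: v) = a * complexify g v :=
  scalable_linear (complexify_scalar g_scalar) a v.
exists (complexify g); split=> [|z|]; first exact: complexify_scalar.
- set c := complexify g z; have [->|c0] := eqVneq c 0; first by rewrite normr0.
  have nc : `|c| != 0 by rewrite normr_eq0.
  pose w := c^* / `|c|.
  have wc : w * c = `|c| by rewrite mulrAC [_ * c]mulrC -normCK expr2 mulfK.
  have nw : `|w| = 1 by rewrite normrM normfV normr_id normcJ mulfV.
  have fwz : complexify g (w *: z) = `|c| by rewrite fZ -/c wc.
  rewrite -(RRe_real (normr_real c)) -fwz normE lecR.
  by apply: le_trans (gp (w *: z)) _; rewrite /p normrZ nw mul1r.
- rewrite normE; apply: le_trans (normc_ge_Re _).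
  by rewrite lecR -gy; apply: real_ler_norm; apply: num_real.
Qed.
End ComplexNorming.

Lemma bounded_scalar_dual_elem (K : numFieldType) (Y : normedModType K) (f : Y -> K)
    (c : K) :
  0 <= c -> scalar f -> (forall z, `|f z| <= c * `|z|) -> dual_elem f.
Proof.
move=> c0 f_scalar fc; split => //.
pose fl := HB.pack_for {linear Y -> K^o} f (GRing.isLinear.Build K Y K^o *:%R f f_scalar).
apply: (@bounded_linear_continuous _ _ _ fl); apply/linear_boundedP.
near=> r => z; apply: le_trans (fc z) _; rewrite ler_wpM2r //.
by near: r; apply: nbhs_pinfty_ge; rewrite ger0_real.
Unshelve. all: by end_near.
Qed.

Section LimitedBounded.
Variables (K : numFieldType) (Y : normedModType K).
Hypothesis archi : forall c : K, 0 <= c -> exists n : nat, c <= n%:R.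

Lemma weak_star_null_harmonic (g : nat -> Y -> K) :
  (forall n, scalar (g n)) -> (forall n z, `|g n z| <= `|z|) ->
  weak_star_null (fun n y => n.+1%:R^-1 * g n y).
Proof.
move=> g_scalar gb; have w0 n : 0 <= n.+1%:R^-1 :> K by rewrite invr_ge0.
split=> [n|y].
- apply: (bounded_scalar_dual_elem (w0 n)) => [a x z|z].
  + by rewrite g_scalar mulrDr mulrCA.
  + by rewrite normrM ger0_norm // ler_wpM2l.
- apply/cvgr0Pnorm_lt => eps eps0.
  have [N yN] := archi (divr_ge0 (normr_ge0 y) (ltW eps0)).
  exists N => // n /= Nn; rewrite normrM ger0_norm //.
  apply: le_lt_trans (ler_wpM2l (w0 n) (gb n y)) _.
  rewrite mulrC ltr_pdivrMr // (le_lt_trans (y := N%:R * eps)) -?ler_pdivrMr //.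
  by rewrite mulrC ltr_pM2l // ltr_nat ltnS.
Qed.

Hypothesis norming : forall y : Y, exists g, norming_functional y g.

Lemma limited_bounded (A : set Y) : limited A -> exists M, forall a, A a -> `|a| <= M.
Proof.
move=> limA; apply: contrapT => unbdd.
have /choice [a aP] : forall n, exists a, A a /\ n.+1%:R < `|a|.
  move=> n; apply: contrapT => small; apply: unbdd; exists n.+1%:R => a Aa.
  by rewrite real_leNgt ?num_real //; apply/negP => lt; apply: small; exists a.
have /choice [g gP] := fun n => norming (a n).
have g_scalar n : scalar (g n) by case: (gP n).
have gb n : forall z, `|g n z| <= `|z| by case: (gP n).
have [N _ HN] := limA _ (weak_star_null_harmonic g_scalar gb) 1 ltr01.
have [AaN aN_gt] := aP N; have [_ _ gaN] := gP N.
have /= := HN N (leqnn N) _ AaN; apply/negP; rewrite -real_ltNge ?num_real //.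
rewrite normrM ger0_norm ?invr_ge0 // mulrC ltr_pdivlMr // mul1r.
exact: lt_le_trans gaN.
Qed.
End LimitedBounded.

Lemma dependent_choice_seq (T : Type) (P : seq T -> Prop) :
  P [::] -> (forall s, P s -> exists x, P (rcons s x)) ->
  exists e : nat -> T, forall n, P (mkseq e n).
Proof.
move=> P0 Pext; have [x0 _] := Pext _ P0.
have /choice [next Pnext] : forall s, exists x, P s -> P (rcons s x).
  move=> s; have [/Pext [x Px]|nPs] := pselect (P s); first by exists x.
  by exists x0 => /nPs.
pose pre n := iter n (fun s => rcons s (next s)) [::].
have Ppre n : P (pre n) by elim: n => //= n; apply: Pnext.
pose e n := next (pre n); exists e => n; suff -> : mkseq e n = pre n by [].
by elim: n => // n IHn; rewrite mkseqS IHn.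
Qed.

Section InnerProduct.
Variables (K : numFieldType) (conj : {rmorphism K -> K}).
Hypothesis conj_mul_norm : forall a, conj a * a = `|a| ^+ 2.
Variables (H : normedModType K) (ip : H -> H -> K).
Hypothesis ipP : is_inner_product conj ip.

Fact ip_scalar z : scalar (ip ^~ z).
Proof. by case: ipP => ipl _ _ a x y; apply: ipl. Qed.

Let ipl z := HB.pack_for {linear H -> K^o} (ip ^~ z)
  (GRing.isLinear.Build K H K^o *:%R (ip ^~ z) (ip_scalar z)).

Lemma ipB x y z : ip (x - y) z = ip x z - ip y z.
Proof. exact: raddfB (ipl z) x y. Qed.

Lemma ipZ a x z : ip (a *: x) z = a * ip x z.
Proof. exact: linearZ_LR (ipl z) a x. Qed.

Lemma ip_sum I (r : seq I) (F : I -> H) z :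
  ip (\sum_(i <- r) F i) z = \sum_(i <- r) ip (F i) z.
Proof. exact (raddf_sum (ipl z) r xpredT F). Qed.

Lemma ipC x y : ip y x = conj (ip x y).
Proof. by case: ipP. Qed.

Lemma ip_norm x : ip x x = `|x| ^+ 2.
Proof. by case: ipP. Qed.

Lemma ipBr x y z : ip x (y - z) = ip x y - ip x z.
Proof. by rewrite ipC ipB rmorphB -!ipC. Qed.

Lemma ipZr a x z : ip x (a *: z) = conj a * ip x z.
Proof. by rewrite ipC ipZ rmorphM -ipC. Qed.

Lemma unit_norm x : ip x x = 1 -> `|x| = 1.
Proof. by rewrite ip_norm => /eqP; rewrite sqrp_eq1 // => /eqP. Qed.

Lemma ler_norm_ip x e : ip e e = 1 -> `|ip x e| <= `|x|.
Proof.
move=> ee; set a := ip x e.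
have res : ip (x - a *: e) (x - a *: e) = `|x| ^+ 2 - `|a| ^+ 2.
  rewrite ipB ipZ !ipBr !ipZr ee ip_norm -/a (ipC x e) -/a conj_mul_norm.
  by rewrite mulr1 subrr mulr0 subr0.
have : `|a| ^+ 2 <= `|x| ^+ 2 by rewrite -subr_ge0 -res ip_norm exprn_ge0.
by rewrite ler_pXn2r // nnegrE.
Qed.

Definition orthonormal_list (s : seq H) :=
  forall i j, (i < size s)%N -> (j < size s)%N -> ip s`_i s`_j = (i == j)%:R.

Lemma orthonormal_list_rcons s x :
  orthonormal_list s -> ip x x = 1 -> (forall i, (i < size s)%N -> ip x s`_i = 0) ->
  orthonormal_list (rcons s x).
Proof.
move=> sP xx xs i j; rewrite size_rcons !ltnS !nth_rcons.
case: (ltngtP i (size s)) => [ilt|//|ie] _; case: (ltngtP j (size s)) => [jlt|//|je] _.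
- exact: sP.
- by rewrite je ipC xs // rmorph0 ltn_eqF.
- by rewrite ie xs // gtn_eqF.
- by rewrite ie je eqxx.
Qed.

Lemma orthonormal_mkseq (e : nat -> H) :
  (forall n, orthonormal_list (mkseq e n)) -> orthonormal_seq ip e.
Proof.
move=> eP i j; have := eP (maxn i j).+1 i j.
by rewrite size_mkseq !nth_mkseq ?ltnS ?leq_maxl ?leq_maxr //; apply.
Qed.

Lemma ip_sub_proj s x j : orthonormal_list s -> (j < size s)%N ->
  ip (x - \sum_(i < size s) ip x s`_i *: s`_i) s`_j = 0.
Proof.
move=> sP js; rewrite ipB ip_sum (bigD1 (Ordinal js)) //= big1 ?addr0.
  by rewrite ipZ sP // eqxx mulr1 subrr.
move=> i ne; rewrite ipZ sP //.
by rewrite -[nat_of_ord i == j]/(i == Ordinal js) (negbTE ne) mulr0.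
Qed.

Variables (Y : normedModType K) (T : H -> Y).
Hypothesis T_linear : linear T.
HB.instance Definition _ := GRing.isLinear.Build K H Y *:%R T T_linear.

Lemma bounded_of_orthogonal_bounded s M : orthonormal_list s ->
  (forall z, (forall i, (i < size s)%N -> ip z s`_i = 0) -> `|T z| <= M * `|z|) ->
  0 <= M -> bounded_op T.
Proof.
move=> sP Tz M0; exists (\sum_(i < size s) `|T s`_i| + M * (1 + (size s)%:R)) => x.
set Px := \sum_(i < size s) ip x s`_i *: s`_i.
have unit_s (i : 'I_(size s)) : ip s`_i s`_i = 1 by rewrite sP // eqxx.
have TPx : `|T Px| <= `|x| * \sum_(i < size s) `|T s`_i|.
  rewrite linear_sum mulr_sumr; apply: le_trans (ler_norm_sum _ _ _) (ler_sum _ _) => i _.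
  by rewrite linearZ normrZ ler_wpM2r // ler_norm_ip.
have xPx : `|x - Px| <= `|x| * (1 + (size s)%:R).
  apply: le_trans (ler_normB _ _) _; rewrite mulrDr mulr1 lerD2l.
  apply: le_trans (ler_norm_sum _ _ _) _.
  apply: (le_trans (y := \sum_(i < size s) `|x|)).
    by apply: ler_sum => i _; rewrite normrZ (unit_norm (unit_s i)) mulr1 ler_norm_ip.
  by rewrite sumr_const card_ord mulr_natr.
have -> : T x = T (x - Px) + T Px by rewrite -linearD subrK.
apply: le_trans (ler_normD _ _) _; rewrite mulrDl addrC lerD ?(mulrC _ `|x|) //.
apply: le_trans (Tz _ (fun j => ip_sub_proj x sP)) _.
by rewrite mulrCA ler_wpM2l.
Qed.

Lemma unbounded_on_orthogonal s M : orthonormal_list s -> 0 <= M -> ~ bounded_op T ->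
  exists x, [/\ ip x x = 1, forall i, (i < size s)%N -> ip x s`_i = 0 & M < `|T x|].
Proof.
move=> sP M0 unbdd; apply: contrapT => small; apply: unbdd.
apply: (bounded_of_orthogonal_bounded sP _ M0) => z zs.
have [->|z0] := eqVneq z 0; first by rewrite linear0 !normr0 mulr0.
rewrite real_leNgt ?normr_real ?ger0_real ?mulr_ge0 //; apply/negP => lt; apply: small.
have nz : 0 < `|z| by rewrite normr_gt0.
exists (`|z|^-1 *: z); split.
- by rewrite ip_norm normrZ ger0_norm ?invr_ge0 // mulVf ?expr1n // gt_eqF.
- by move=> i si; rewrite ipZ zs // mulr0.
- by rewrite linearZ normrZ ger0_norm ?invr_ge0 // mulrC ltr_pdivlMr // mulrC.
Qed.

Lemma unbounded_orthonormal_seq : ~ bounded_op T ->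
  exists e, orthonormal_seq ip e /\ forall n, n.+1%:R < `|T (e n)|.
Proof.
move=> unbdd.
pose P s := orthonormal_list s /\ forall i, (i < size s)%N -> i.+1%:R < `|T s`_i|.
have [e eP] : exists e, forall n, P (mkseq e n).
  apply: dependent_choice_seq => [|s [sP sT]]; first by split.
  have [x [xx xs Tx]] := unbounded_on_orthogonal sP (ler0n K (size s).+1) unbdd.
  exists x; split; first exact: orthonormal_list_rcons.
  move=> i; rewrite size_rcons ltnS nth_rcons.
  by case: (ltngtP i (size s)) => [/sT|//|->]; rewrite ?eqxx.
exists e; split; first by apply: orthonormal_mkseq => n; case: (eP n).
by move=> n; have [_ /(_ n)] := eP n.+1; rewrite size_mkseq nth_mkseq //; apply.
Qed.

Hypotheses (archi : forall c : K, 0 <= c -> exists n : nat, c <= n%:R)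
  (norming : forall y : Y, exists g, norming_functional y g).

Theorem bounded_of_limited_orthonormal :
  (forall e, orthonormal_seq ip e -> limited (T @` range e)) -> bounded_op T.
Proof.
move=> lim; apply: contrapT => unbdd.
have [e [eP eT]] := unbounded_orthonormal_seq unbdd.
have [M TeM] := limited_bounded archi norming (lim e eP).
have Te n : (T @` range e) (T (e n)) by exists (e n) => //; exists n.
have M0 : 0 <= M := le_trans (normr_ge0 _) (TeM _ (Te 0%N)).
have [n Mn] := archi M0.
have := TeM _ (Te n); apply/negP; rewrite -real_ltNge ?normr_real ?ger0_real //.
by apply: le_lt_trans Mn (lt_trans _ (eT n)); rewrite ltr_nat.
Qed.
End InnerProduct.

Lemma complex_archi (R : realType) (c : Cx R) : 0 <= c -> exists n : nat, c <= n%:R.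
Proof.
move=> c0; have cE : c = (complex.Re c)%:C%C by rewrite RRe_real ?ger0_real.
have Rc0 : 0 <= complex.Re c by rewrite -ler0c -cE.
exists (Num.bound (complex.Re c)); rewrite cE -(rmorph_nat (real_complex R)) lecR.
exact/ltW/archi_boundP.
Qed.

Theorem corollary3 :
  (forall (R : realType) (H Y : completeNormedModType R) (ip : H -> H -> R),
     is_inner_product id ip ->
     forall T : H -> Y, linear T ->
     (forall e : nat -> H, orthonormal_seq ip e -> limited (T @` range e)) ->
     bounded_op T)
  /\
  (forall (R : realType) (H Y : completeNormedModType (Cx R))
          (ip : H -> H -> Cx R),
     is_inner_product Num.conj ip ->
     forall T : H -> Y, linear T ->
     (forall e : nat -> H, orthonormal_seq ip e -> limited (T @` range e)) ->
     bounded_op T).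
Proof.
split=> R H Y ip ipP T T_linear.
- apply: (@bounded_of_limited_orthonormal _ idfun) ipP _ _ T_linear _ _.
  + by move=> a; rewrite /= real_normK ?num_real // expr2.
  + by move=> c c0; exists (Num.bound c); exact/ltW/archi_boundP.
  + exact: real_norming_functional.
- apply: (@bounded_of_limited_orthonormal _ Num.conj) ipP _ _ T_linear _ _.
  + by move=> a; rewrite normCK mulrC.
  + exact: complex_archi.
  + exact: complex_norming_functional.
Qed.
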